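(* In the model below, assume $\lambda<\mu$ and that the sender uses any coding scheme satisfying the innovation guarantee property. Then for each receiver, the expected delivery delay of an arbitrary packet in steady state is $O\left(\frac{1}{(1-\rho)^2}\right)$ as $\rho=\lambda/\mu\to1^-$ (with $\lambda,\mu\in(0,1)$ and one of them held fixed).
   Context: Model: a sender broadcasts a stream of packets to $n$ receivers. Packets are fixed-length vectors over $\mathbb{F}_q$; the $k$-th arriving packet is $\mathbf{p}_k$. Time is slotted; in each slot one packet arrives with probability $\lambda$ independently (just after the slot begins). The sender transmits at most one linear combination of the packets it holds per slot (coefficients in the header). Each receiver independently receives it with probability $\mu$, else a detectable erasure; independent across receivers and slots; perfect feedback reaches the sender before the end of the slot. $\rho=\lambda/\mu$. A node's knowledge space is the space of coefficient vectors (w.r.t. arrived packets) of linear combinations it can compute; denote the sender's by $V$ and receiver $j$'s by $V_j$. A coding scheme satisfies the innovation guarantee property if in every slot the transmitted coefficient vector lies in $V\setminus V_j$ for every $j$ with $V_j\neq V$. The delivery delay of a packet with respect to a receiver is the time between the packet's arrival at the sender and its delivery by the receiver to the application, where packets may be delivered only in order (a packet is delivered once it and all earlier packets have been decoded). *)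

From mathcomp Require Import all_boot all_algebra.
From mathcomp Require Import boolp reals.

Set Implicit Arguments.
Unset Strict Implicit.
Unset Printing Implicit Defensive.
Import GRing.Theory Num.Theory.
Local Open Scope ring_scope.

(* Coefficient vectors w.r.t. the arrived packets p_0, p_1, ... (0-indexed):
   a vector is a function nat -> F (coefficient of packet i at index i). *)
Definition coefvec (F : finFieldType) := nat -> F.

Definition unitv (F : finFieldType) (k : nat) : coefvec F :=
  fun i => if i == k then 1 else 0.

Definition in_span (F : finFieldType) (S : seq (coefvec F)) (v : coefvec F) : Prop :=
  exists c : nat -> F,
    forall i, v i = \sum_(m < size S) c m * nth (fun _ => 0) S m i.

(* Sample path: a t = packet arrives in slot t;
   r t j = receiver j receives the transmission of slot t. *)
Definition arrivals := nat -> bool.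
Definition receptions (n : nat) := nat -> 'I_n -> bool.

(* A (deterministic) coding scheme: coefficient vector sent in slot t as a
   function of the sample path (causality imposed separately). *)
Definition scheme (F : finFieldType) (n : nat) :=
  nat -> arrivals -> receptions n -> coefvec F.

(* number of packets arrived by slot t (arrival of slot t included) *)
Definition arrived (a : arrivals) (t : nat) : nat := (\sum_(i < t.+1) a i)%N.

(* sender knowledge space in slot t = span of e_i, i < arrived a t *)
Definition Vsend (F : finFieldType) (a : arrivals) (t : nat) (v : coefvec F) : Prop :=
  forall i, (arrived a t <= i)%N -> v i = 0.

Definition rxvecs (F : finFieldType) (n : nat) (s : scheme F n)
  (a : arrivals) (r : receptions n) (j : 'I_n) (t : nat) : seq (coefvec F) :=
  [seq s u a r | u <- [seq u <- iota 0 t | r u j]].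

(* knowledge space of receiver j at the beginning of slot t *)
Definition Vrecv (F : finFieldType) (n : nat) (s : scheme F n)
  (a : arrivals) (r : receptions n) (j : 'I_n) (t : nat) (v : coefvec F) : Prop :=
  in_span (rxvecs s a r j t) v.

(* decision in slot t uses arrivals up to slot t and feedback up to slot t-1 *)
Definition causal (F : finFieldType) (n : nat) (s : scheme F n) : Prop :=
  forall t a a' r r',
    (forall u, (u <= t)%N -> a u = a' u) ->
    (forall u, (u < t)%N -> r u = r' u) ->
    s t a r = s t a' r'.

Definition sends_known (F : finFieldType) (n : nat) (s : scheme F n) : Prop :=
  forall t a r, Vsend a t (s t a r).

Definition IGP (F : finFieldType) (n : nat) (s : scheme F n) : Prop :=
  forall a r t (j : 'I_n),
    ~ (forall v, Vsend a t v <-> Vrecv s a r j t v) ->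
    Vsend a t (s t a r) /\ ~ Vrecv s a r j t (s t a r).

(* packets 0..k all decoded by receiver j by the end of slot t *)
Definition delivered (F : finFieldType) (n : nat) (s : scheme F n)
  (a : arrivals) (r : receptions n) (j : 'I_n) (k t : nat) : Prop :=
  forall i, (i <= k)%N -> Vrecv s a r j t.+1 (unitv F i).

(* event: packet k arrives in slot t and its delivery delay w.r.t. j exceeds d,
   i.e. it is not delivered by the end of slot t + d *)
Definition late (F : finFieldType) (n : nat) (s : scheme F n) (j : 'I_n)
  (k t d : nat) (a : arrivals) (r : receptions n) : Prop :=
  a t /\ arrived a t = k.+1 /\ ~ delivered s a r j k (t + d).

Definition slot_outcome (n : nat) := (bool * {ffun 'I_n -> bool})%type.

Definition bern (R : realType) (p : R) (b : bool) : R := if b then p else 1 - p.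

Definition ext_a (n T : nat) (w : {ffun 'I_T -> slot_outcome n}) : arrivals :=
  fun t => match insub t with Some i => (w i).1 | None => false end.

Definition ext_r (n T : nat) (w : {ffun 'I_T -> slot_outcome n}) : receptions n :=
  fun t j => match insub t with Some i => (w i).2 j | None => false end.

Definition prefix_weight (R : realType) (n T : nat) (lam mu : R)
  (w : {ffun 'I_T -> slot_outcome n}) : R :=
  \prod_(i < T) (bern lam (w i).1 * \prod_(j < n) bern mu ((w i).2 j)).

(* P(E) for an event E determined by the first T slots *)
Definition prefixProb (R : realType) (n T : nat) (lam mu : R)
  (E : arrivals -> receptions n -> Prop) : R :=
  \sum_(w : {ffun 'I_T -> slot_outcome n})
     prefix_weight lam mu w * (if `[< E (ext_a w) (ext_r w) >] then 1 else 0).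

(* truncation of E[D_k] = sum_{d>=0} P(D_k > d)
                      = sum_{d>=0} sum_{t>=0} P(packet k arrives at t, D_k > d);
   E[D_k] is the supremum over N of these nonnegative partial sums. *)
Definition truncExpDelay (R : realType) (F : finFieldType) (n : nat)
  (lam mu : R) (s : scheme F n) (j : 'I_n) (k N : nat) : R :=
  \sum_(d < N) \sum_(t < N) prefixProb (t + d).+1 lam mu (late s j k t d).

(* "limsup_k E[D_k] <= B" (up to the usual constant slack) *)
Definition eventually_delay_le (R : realType) (F : finFieldType) (n : nat)
  (lam mu : R) (s : scheme F n) (j : 'I_n) (B : R) : Prop :=
  exists K, forall k N, (K <= k)%N -> truncExpDelay lam mu s j k N <= B.

Definition valid_IGP_scheme (F : finFieldType) (n : nat) (s : scheme F n) : Prop :=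
  causal s /\ sends_known s /\ IGP s.

From mathcomp Require Import all_boot all_order all_algebra.
From mathcomp Require Import boolp reals.
From mathcomp Require Import zify ring lra.
Import Order.TTheory GRing.Theory Num.Theory.
Set Implicit Arguments.
Unset Strict Implicit.
Unset Printing Implicit Defensive.
Local Open Scope ring_scope.

(* Let A_t be the number of packets arrived before slot t and Q_t the virtual
   queue of receiver j, Q_(t+1) = (Q_t + a_t - r_t)^+.  By the innovation
   guarantee every reception while Q_t > 0 raises the rank of the receiver's
   knowledge space, so this rank is at least A_t - Q_t: all arrived packets are
   decoded whenever the queue is empty.  Hence a delay of packet k (arriving in
   slot t) beyond d forces Q > 0 during the d + 1 slots after t.  While positive,
   Q drifts by lam - mu < 0, so these busy periods have expected length at most
   E[Q_(t+1)] / (mu - lam), and it remains to bound sum_t E[1{A_t = k} (Q_t + 1)].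
   The balance equations of the chain (A_t, Q_t) bound sum_t P(A_t = k, Q_t >= x)
   by r^x / lam with r = lam (1 - mu) / (mu (1 - lam)) < 1; summing the geometric
   series gives E[D_k] <= mu (1 - lam) / (mu - lam)^2 for every k. *)

Section Spans.

Variable F : finFieldType.

Lemma in_span_nat (S : seq (coefvec F)) v :
  in_span S v <-> exists c : nat -> F, forall i,
    v i = \sum_(0 <= m < size S) c m * nth (fun _ => 0) S m i.
Proof. by split=> -[c Hc]; exists c => i; rewrite Hc big_mkord. Qed.

Lemma in_span_nil (v : coefvec F) : in_span [::] v <-> forall i, v i = 0.
Proof.
split=> [[c Hc] i | Hv]; first by rewrite Hc big_ord0.
by exists (fun _ => 0) => i; rewrite Hv big_ord0.
Qed.

Lemma in_span_rcons (S : seq (coefvec F)) x v :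
  in_span (rcons S x) v <-> exists c0, in_span S (fun i => v i - c0 * x i).
Proof.
rewrite in_span_nat; split.
  move=> [c Hc]; exists (c (size S)); apply/in_span_nat; exists c => i.
  rewrite Hc size_rcons big_nat_recr //= nth_rcons ltnn eqxx addrK.
  by apply: eq_big_nat => m /andP[_ Hm]; rewrite nth_rcons Hm.
move=> [c0 /in_span_nat [c Hc]].
exists (fun m => if m == size S then c0 else c m) => i.
rewrite size_rcons big_nat_recr //= nth_rcons ltnn !eqxx.
apply/eqP; rewrite -subr_eq; apply/eqP; rewrite Hc.
by apply: eq_big_nat => m /andP[_ Hm]; rewrite nth_rcons Hm (ltn_eqF Hm).
Qed.

Lemma in_span_ext (S : seq (coefvec F)) (v w : coefvec F) :
  (forall i, v i = w i) -> in_span S v -> in_span S w.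
Proof. by move=> Evw [c Hc]; exists c => i; rewrite -Evw. Qed.

Lemma in_span_rcons_r (S : seq (coefvec F)) x v :
  in_span S v -> in_span (rcons S x) v.
Proof.
move=> Sv; apply/in_span_rcons; exists 0.
by apply: in_span_ext Sv => i; rewrite mul0r subr0.
Qed.

(* Coefficient vectors are infinite; those vanishing from index W on are
   identified with row vectors of length W, so that spans become row spaces. *)
Definition supported W (v : coefvec F) := forall i, (W <= i)%N -> v i = 0.

Definition row_of W (v : coefvec F) : 'rV[F]_W := \row_(i < W) v i.

Lemma row_of_eq0 W (v : coefvec F) :
  supported W v -> row_of W v = 0 <-> forall i, v i = 0.
Proof.
move=> Wv; split=> [v0 i | v0]; last by apply/rowP => i; rewrite !mxE v0.
case: (ltnP i W) => [Hi | /Wv //].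
by have := congr1 (fun M : 'rV[F]_W => M 0 (Ordinal Hi)) v0; rewrite !mxE.
Qed.

Lemma row_ofB W (v w : coefvec F) c :
  row_of W (fun i => v i - c * w i) = row_of W v - c *: row_of W w.
Proof. by apply/rowP => i; rewrite !mxE. Qed.

Lemma supported_unitv W i : (i < W)%N -> supported W (unitv F i).
Proof. by move=> Hi l Hl; rewrite /unitv; case: eqP => // Eli; lia. Qed.

End Spans.

Section ReceiverSpace.

Variables (F : finFieldType) (n : nat) (s : scheme F n).
Variables (a : arrivals) (r : receptions n) (j : 'I_n).

Lemma rxvecsS t :
  rxvecs s a r j t.+1 =
  rxvecs s a r j t ++ (if r t j then [:: s t a r] else [::]).
Proof. by rewrite /rxvecs -addn1 iotaD filter_cat map_cat add0n /=; case: (r t j). Qed.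

Lemma Vrecv_mono t t' v : (t <= t')%N -> Vrecv s a r j t v -> Vrecv s a r j t' v.
Proof.
elim: t' => [|t' IH]; first by rewrite leqn0 => /eqP ->.
rewrite leq_eqVlt => /orP[/eqP -> //|]; rewrite ltnS => /IH tv /tv {}tv.
rewrite /Vrecv rxvecsS; case: (r t' j); last by rewrite cats0.
by rewrite cats1; apply: in_span_rcons_r.
Qed.

Fixpoint rx_space W t : 'M[F]_W :=
  if t is t'.+1 then
    if r t' j then (rx_space W t' + row_of W (s t' a r))%MS else rx_space W t'
  else 0.

Lemma Vrecv_submxE W t :
  (forall u, (u < t)%N -> supported W (s u a r)) ->
  forall v, supported W v -> Vrecv s a r j t v <-> (row_of W v <= rx_space W t)%MS.
Proof.
elim: t => [|t IH] Ws v Wv.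
  rewrite /Vrecv /rxvecs in_span_nil submx0; split=> [v0 | /eqP v0].
    exact/eqP/(row_of_eq0 Wv).
  exact/(row_of_eq0 Wv).
have {}IH := IH (fun u Hu => Ws u (ltnW Hu)).
rewrite /Vrecv rxvecsS /=; case: (r t j); last by rewrite cats0; apply: IH.
have Wst := Ws t (ltnSn t).
have Wsub c0 : supported W (fun i => v i - c0 * s t a r i).
  by move=> i Hi; rewrite Wv // Wst // mulr0 subr0.
rewrite cats1 in_span_rcons; split.
  move=> [c0 /(IH _ (Wsub c0))]; rewrite row_ofB => Hsub.
  rewrite -(subrK (c0 *: row_of W (s t a r)) (row_of W v)).
  by apply: addmx_sub_adds => //; apply: scalemx_sub.
move/sub_addsmxP => [[u1 u2] /= Huv].
exists (u2 0 0); apply/(IH _ (Wsub _)); rewrite row_ofB Huv.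
by rewrite {1}(mx11_scalar u2) mul_scalar_mx addrK submxMl.
Qed.

End ReceiverSpace.

Definition arrived_before (a : arrivals) t : nat := (\sum_(i < t) a i)%N.

Fixpoint queue n (j : 'I_n) (a : arrivals) (r : receptions n) t : nat :=
  if t is t'.+1 then (queue j a r t' + a t' - r t' j)%N else 0%N.

Lemma arrived_beforeS a t : arrived_before a t.+1 = (arrived_before a t + a t)%N.
Proof. by rewrite /arrived_before big_ord_recr. Qed.

Lemma arrivedE a t : arrived a t = arrived_before a t.+1.
Proof. by []. Qed.

Lemma arrived_before_mono a : {homo arrived_before a : m k / (m <= k)%N}.
Proof.
move=> m k /subnK <-; elim: (k - m)%N => [//|d IH].
by rewrite addSn arrived_beforeS; lia.
Qed.

Lemma queue_le n (j : 'I_n) a r t : (queue j a r t <= t)%N.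
Proof. by elim: t => [//|t IH] /=; case: (a t); case: (r t j) => /=; lia. Qed.

Fixpoint busy_for n (j : 'I_n) a r (d T0 : nat) : bool :=
  (0 < queue j a r T0)%N && (if d is d'.+1 then busy_for j a r d' T0.+1 else true).

Lemma busy_forP n (j : 'I_n) a r d T0 :
  (forall e, (e <= d)%N -> (0 < queue j a r (T0 + e))%N) -> busy_for j a r d T0.
Proof.
elim: d T0 => [|d IH] T0 busy /=; have := busy 0%N (leq0n _); rewrite addn0 => -> //=.
by apply: IH => e He; rewrite addSnnS; apply: busy.
Qed.

Section Decoding.

Variables (F : finFieldType) (n : nat) (s : scheme F n).
Hypotheses (s_known : sends_known s) (s_IGP : IGP s).
Variables (a : arrivals) (r : receptions n) (j : 'I_n).

Lemma supported_sent U u : (u < U)%N -> supported (arrived_before a U) (s u a r).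
Proof.
move=> uU i Hi; apply: s_known; apply: leq_trans Hi.
exact: arrived_before_mono.
Qed.

(* Either the receiver already knows every packet held by the sender, or the
   innovation guarantee applies to the slot-t transmission. *)
Lemma rx_space_decoded_or_grows W t :
  (arrived_before a t.+1 <= W)%N ->
  (forall u, (u <= t)%N -> supported W (s u a r)) ->
  (arrived_before a t.+1 <= \rank (rx_space s a r j W t))%N \/
  (rx_space s a r j W t < rx_space s a r j W t + row_of W (s t a r))%MS.
Proof.
move=> AW Ws; have Vrecv_t := Vrecv_submxE j (fun u Hu => Ws u (ltnW Hu)).
case: (pselect (forall v, Vsend a t v <-> Vrecv s a r j t v)) => [same | differ].
  left; rewrite -[X in (X <= _)%N](@rank_pid_mx F (arrived_before a t.+1) W) //.
  apply: mxrankS; apply/row_subP => i.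
  have iW : (i < W)%N by apply: leq_trans (ltn_ord i) AW.
  have -> : row i (pid_mx (arrived_before a t.+1) : 'M[F]_(_, W)) =
            row_of W (unitv F i).
    apply/rowP => l; rewrite !mxE /unitv ltn_ord andbT eq_sym.
    by case: (l == i :> nat).
  apply/(Vrecv_t _ (supported_unitv _ iW))/same => l Hl.
  have {}Hl : (arrived_before a t.+1 <= l)%N := Hl.
  by rewrite /unitv; case: eqP => // Eli; have := ltn_ord i; lia.
have [_ not_known] := s_IGP differ; right.
rewrite ltmxE addsmxSl /=; apply/negP => Hsub; apply: not_known.
apply/(Vrecv_t _ (Ws t (leqnn t))).
exact: submx_trans (addsmxSr _ _) Hsub.
Qed.

Lemma arrived_before_le_rank_queue W t :
  (arrived_before a t <= W)%N ->
  (forall u, (u < t)%N -> supported W (s u a r)) ->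
  (arrived_before a t <= \rank (rx_space s a r j W t) + queue j a r t)%N.
Proof.
elim: t => [|t IH] AW Ws; first by rewrite /arrived_before big_ord0.
have {}IH := IH (leq_trans (arrived_before_mono a (leqnSn t)) AW)
                (fun u Hu => Ws u (ltnW Hu)).
have rank_mono : (\rank (rx_space s a r j W t) <=
                  \rank (rx_space s a r j W t + row_of W (s t a r))%MS)%N.
  exact/mxrankS/addsmxSl.
case: (rx_space_decoded_or_grows AW Ws) => [|/rank_ltmx];
  rewrite !arrived_beforeS /=; case: (r t j) => /=; lia.
Qed.

Lemma decoded_of_queue_eq0 U : queue j a r U = 0%N ->
  forall i, (i < arrived_before a U)%N -> Vrecv s a r j U (unitv F i).
Proof.
move=> QU i iU; have Ws := @supported_sent U.
have := arrived_before_le_rank_queue (leqnn _) Ws; rewrite QU addn0 => full.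
apply/(Vrecv_submxE j Ws (supported_unitv _ iU)).
by apply: submx_full; rewrite /row_full eqn_leq rank_leq_col.
Qed.

Lemma late_busy k t d : late s j k t d a r ->
  [&& a t, arrived_before a t == k & busy_for j a r d t.+1].
Proof.
move=> [a_t [At not_delivered]]; rewrite arrivedE arrived_beforeS a_t in At.
rewrite a_t /=; apply/andP; split; first by apply/eqP; lia.
apply: busy_forP => e He; rewrite lt0n; apply/negP => /eqP Qe.
apply: not_delivered => i ik; apply: (Vrecv_mono (t := t.+1 + e)); first by lia.
apply: decoded_of_queue_eq0 => //; apply: leq_trans (arrived_before_mono a (leq_addr e t.+1)).
by rewrite arrived_beforeS a_t; lia.
Qed.

End Decoding.

Definition ffun_snoc (X : finType) T (w : {ffun 'I_T -> X}) (o : X) :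
  {ffun 'I_T.+1 -> X} :=
  [ffun i => if unlift ord_max i is Some i' then w i' else o].

Lemma ffun_snoc_widen (X : finType) T (w : {ffun 'I_T -> X}) o i :
  ffun_snoc w o (widen_ord (leqnSn T) i) = w i.
Proof.
by rewrite ffunE (_ : widen_ord _ i = lift ord_max i) ?liftK //; apply/val_inj/esym/lift_max.
Qed.

Lemma ffun_snoc_max (X : finType) T (w : {ffun 'I_T -> X}) o :
  ffun_snoc w o ord_max = o.
Proof. by rewrite ffunE unlift_none. Qed.

Lemma sum_ffunS (V : nmodType) (X : finType) T (G : {ffun 'I_T.+1 -> X} -> V) :
  \sum_(w : {ffun 'I_T.+1 -> X}) G w =
  \sum_(w : {ffun 'I_T -> X}) \sum_(o : X) G (ffun_snoc w o).
Proof.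
have lift_maxW (i : 'I_T) : lift ord_max i = widen_ord (leqnSn T) i.
  exact/val_inj/lift_max.
rewrite pair_big /= (reindex (fun p : {ffun 'I_T -> X} * X => ffun_snoc p.1 p.2)) //=.
exists (fun w => ([ffun i => w (widen_ord (leqnSn T) i)], w ord_max)).
  move=> [w o] _ /=; congr pair; last exact: ffun_snoc_max.
  by apply/ffunP => i; rewrite ffunE ffun_snoc_widen.
move=> w _; apply/ffunP => i; rewrite ffunE /=.
by case: unliftP => [i'|] -> //; rewrite ffunE lift_maxW.
Qed.

Lemma insub_ffun_snoc (X : finType) T (w : {ffun 'I_T -> X}) o t :
  omap (ffun_snoc w o) (insub t) = if t == T then Some o else omap w (insub t).
Proof.
case: (ltngtP t T) => [tT | Tt | ->].
- rewrite (@insubT _ _ 'I_T _ tT) (@insubT _ _ 'I_T.+1 _ (ltnW tT)) /= ffunE.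
  have -> : @Sub _ _ 'I_T.+1 t (ltnW tT) = lift ord_max (Ordinal tT).
    exact/val_inj/esym/lift_max.
  by rewrite liftK.
- have tT1 : (t < T.+1)%N = false by rewrite ltnS leqNgt Tt.
  have tT : (t < T)%N = false by rewrite ltnNge ltnW.
  by rewrite (@insubF _ _ 'I_T.+1 _ tT1) (@insubF _ _ 'I_T _ tT).
- rewrite (@insubT _ _ 'I_T.+1 _ (ltnSn T)) /= ffunE.
  by rewrite (_ : @Sub _ _ 'I_T.+1 T (ltnSn T) = ord_max) ?unlift_none //; apply: val_inj.
Qed.

Definition set_arrival (a : arrivals) (T : nat) (b : bool) : arrivals :=
  fun t => if t == T then b else a t.

Definition set_reception n (r : receptions n) (T : nat) (c : {ffun 'I_n -> bool}) :
  receptions n := fun t i => if t == T then c i else r t i.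

Lemma ext_a_snoc n T (w : {ffun 'I_T -> slot_outcome n}) o :
  ext_a (ffun_snoc w o) = set_arrival (ext_a w) T o.1.
Proof.
apply: funext => t; have := insub_ffun_snoc w o t; rewrite /ext_a /set_arrival.
by case: (insub t) => [i|]; case: (insub t) => [i'|]; case: (t == T) => //= -[->].
Qed.

Lemma ext_r_snoc n T (w : {ffun 'I_T -> slot_outcome n}) o :
  ext_r (ffun_snoc w o) = set_reception (ext_r w) T o.2.
Proof.
apply: funext => t; have := insub_ffun_snoc w o t; rewrite /ext_r /set_reception.
by case: (insub t) => [i|]; case: (insub t) => [i'|]; case: (t == T) => //= -[->].
Qed.

Definition determined_before (V : Type) n T (g : arrivals -> receptions n -> V) :=
  forall a a' r r', (forall u, (u < T)%N -> a u = a' u) ->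
    (forall u, (u < T)%N -> r u = r' u) -> g a r = g a' r'.

Lemma determined_before_le (V : Type) n T T' (g : arrivals -> receptions n -> V) :
  (T <= T')%N -> determined_before T g -> determined_before T' g.
Proof.
move=> TT' g_det a a' r r' aa' rr'.
by apply: g_det => u uT; [apply: aa' | apply: rr']; apply: leq_trans TT'.
Qed.

Lemma queue_determined n (j : 'I_n) t :
  determined_before t (fun a r => queue j a r t).
Proof.
elim: t => [//|t IH] a a' r r' aa' rr' /=.
rewrite (IH a a' r r') ?aa' ?rr' // => u ut; [apply: aa' | apply: rr']; exact: ltnW.
Qed.

Lemma arrived_before_determined n t :
  determined_before t (fun a (_ : receptions n) => arrived_before a t).
Proof. by move=> a a' r r' aa' _; apply: eq_bigr => i _; rewrite aa'. Qed.

Lemma determined_set_slot (V : Type) n T (g : arrivals -> receptions n -> V) :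
  determined_before T g ->
  forall a r b c, g (set_arrival a T b) (set_reception r T c) = g a r.
Proof. by move=> g_det a r b c; apply: g_det => u uT; rewrite /set_arrival /set_reception ltn_eqF. Qed.

Section PrefixExpectation.

Variables (R : realType) (n : nat) (lam mu : R).

Definition slot_weight (o : slot_outcome n) : R :=
  bern lam o.1 * \prod_(j < n) bern mu (o.2 j).

Definition expect T (f : arrivals -> receptions n -> R) : R :=
  \sum_(w : {ffun 'I_T -> slot_outcome n})
    prefix_weight lam mu w * f (ext_a w) (ext_r w).

Lemma prefixProbE T E :
  prefixProb T lam mu E = expect T (fun a r => if `[< E a r >] then 1 else 0).
Proof. by []. Qed.

Lemma eq_expect T (f g : arrivals -> receptions n -> R) :
  (forall a r, f a r = g a r) -> expect T f = expect T g.
Proof. by move=> fg; apply: eq_bigr => w _; rewrite fg. Qed.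

Lemma expectD T (f g : arrivals -> receptions n -> R) :
  expect T (fun a r => f a r + g a r) = expect T f + expect T g.
Proof. by rewrite -big_split; apply: eq_bigr => w _; rewrite mulrDr. Qed.

Lemma expectMl T c (f : arrivals -> receptions n -> R) :
  expect T (fun a r => c * f a r) = c * expect T f.
Proof. by rewrite mulr_sumr; apply: eq_bigr => w _; rewrite mulrCA. Qed.

Lemma expect_sum T M (f : nat -> arrivals -> receptions n -> R) :
  expect T (fun a r => \sum_(x < M) f x a r) = \sum_(x < M) expect T (f x).
Proof. by rewrite exchange_big; apply: eq_bigr => w _; rewrite mulr_sumr. Qed.

Lemma expectS T f :
  expect T.+1 f = expect T (fun a r =>
    \sum_(o : slot_outcome n) slot_weight o * f (set_arrival a T o.1)
                                               (set_reception r T o.2)).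
Proof.
rewrite /expect sum_ffunS; apply: eq_bigr => w _.
rewrite mulr_sumr; apply: eq_bigr => o _.
rewrite ext_a_snoc ext_r_snoc /prefix_weight big_ord_recr /= ffun_snoc_max.
rewrite /slot_weight -!mulrA; congr (_ * _).
by apply: eq_bigr => i _; rewrite ffun_snoc_widen.
Qed.

Lemma sum_bern (p : R) : \sum_(b : bool) bern p b = 1.
Proof. by rewrite big_bool /= addrC subrK. Qed.

Lemma sum_bern_prod_marginal (j : 'I_n) (H : bool -> R) :
  \sum_(f : {ffun 'I_n -> bool}) (\prod_(i < n) bern mu (f i)) * H (f j) =
  \sum_(c : bool) bern mu c * H c.
Proof.
pose K (i : 'I_n) (c : bool) := bern mu c * (if i == j then H c else 1).
transitivity (\sum_(f : {ffun 'I_n -> bool}) \prod_(i < n) K i (f i)).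
  apply: eq_bigr => f _; rewrite /K big_split /=; congr (_ * _).
  by rewrite -big_mkcond big_pred1_eq.
rewrite -(bigA_distr_bigA K) /= (bigD1 j) //= [X in _ * X]big1 ?mulr1.
  by apply: eq_bigr => c _; rewrite /K eqxx.
move=> i /negbTE ij; rewrite /K ij.
by under eq_bigr do rewrite mulr1; rewrite sum_bern.
Qed.

Lemma sum_slot_weight_marginal (j : 'I_n) (G : bool -> bool -> R) :
  \sum_(o : slot_outcome n) slot_weight o * G o.1 (o.2 j) =
  \sum_(b : bool) bern lam b * \sum_(c : bool) bern mu c * G b c.
Proof.
rewrite -[LHS](pair_big xpredT xpredT (fun b f => slot_weight (b, f) * G b (f j))) /=.
apply: eq_bigr => b _; rewrite -(sum_bern_prod_marginal j) mulr_sumr.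
by apply: eq_bigr => f _; rewrite /slot_weight /= mulrA.
Qed.

Lemma sum_slot_weight : \sum_(o : slot_outcome n) slot_weight o = 1.
Proof.
rewrite -[LHS](pair_big xpredT xpredT (fun b f => slot_weight (b, f))) /=.
rewrite -[RHS](sum_bern lam); apply: eq_bigr => b _.
rewrite /slot_weight /= -mulr_sumr -[RHS]mulr1; congr (_ * _).
rewrite -(bigA_distr_bigA (fun _ c => bern mu c)) /=.
by apply: big1 => i _; rewrite sum_bern.
Qed.

Lemma expect_cst T c : expect T (fun _ _ => c) = c.
Proof.
elim: T => [|T IH].
  rewrite /expect (eq_bigr (fun _ => c)) => [|w _]; last first.
    by rewrite /prefix_weight big_ord0 mul1r.
  by rewrite sumr_const card_ffun card_ord expn0.
by rewrite expectS -[RHS]IH; apply: eq_expect => a r; rewrite -big_distrl /= sum_slot_weight mul1r.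
Qed.

Lemma expect_step_queue (j : 'I_n) T (g : arrivals -> receptions n -> R)
    (H : nat -> nat -> bool -> bool -> R) :
  determined_before T g ->
  expect T.+1 (fun a r =>
    g a r * H (queue j a r T) (arrived_before a T) (a T) (r T j)) =
  expect T (fun a r => g a r * \sum_(b : bool) bern lam b *
    \sum_(c : bool) bern mu c * H (queue j a r T) (arrived_before a T) b c).
Proof.
move=> g_det; rewrite expectS; apply: eq_expect => a r.
have slot o : g (set_arrival a T o.1) (set_reception r T o.2) *
    H (queue j (set_arrival a T o.1) (set_reception r T o.2) T)
      (arrived_before (set_arrival a T o.1) T) (set_arrival a T o.1 T)
      (set_reception r T o.2 T j) =
    g a r * H (queue j a r T) (arrived_before a T) o.1 (o.2 j).
  have := determined_set_slot (@queue_determined n j T) a r o.1 o.2.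
  have := determined_set_slot (@arrived_before_determined n T) a r o.1 o.2.
  rewrite /= (determined_set_slot g_det) => -> ->.
  by rewrite /set_arrival /set_reception !eqxx.
under eq_bigr do rewrite slot.
rewrite (sum_slot_weight_marginal j (fun b c => g a r * H _ _ b c)) mulr_sumr.
by apply: eq_bigr => b _; rewrite mulrCA !mulr_sumr; apply: eq_bigr => c _; ring.
Qed.

Lemma expect_step_queue1 (j : 'I_n) T (H : nat -> nat -> bool -> bool -> R) :
  expect T.+1 (fun a r => H (queue j a r T) (arrived_before a T) (a T) (r T j)) =
  expect T (fun a r => \sum_(b : bool) bern lam b *
    \sum_(c : bool) bern mu c * H (queue j a r T) (arrived_before a T) b c).
Proof.
have := @expect_step_queue j T (fun _ _ => 1) H (fun _ _ _ _ _ _ => erefl).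
under eq_expect do rewrite mul1r.
by move=> ->; apply: eq_expect => a r; rewrite mul1r.
Qed.

End PrefixExpectation.

Section NonnegativeExpectation.

Variables (R : realType) (n : nat) (lam mu : R).
Hypotheses (lam01 : 0 <= lam <= 1) (mu01 : 0 <= mu <= 1).

Lemma bern_ge0 (p : R) b : 0 <= p <= 1 -> 0 <= bern p b.
Proof. by move=> /andP[p0 p1]; case: b => //=; rewrite subr_ge0. Qed.

Lemma prefix_weight_ge0 T (w : {ffun 'I_T -> slot_outcome n}) :
  0 <= prefix_weight lam mu w.
Proof.
apply: prodr_ge0 => i _; rewrite mulr_ge0 ?bern_ge0 //.
by apply: prodr_ge0 => k _; apply: bern_ge0.
Qed.

Lemma ler_expect T (f g : arrivals -> receptions n -> R) :
  (forall a r, f a r <= g a r) -> expect lam mu T f <= expect lam mu T g.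
Proof.
by move=> fg; apply: ler_sum => w _; rewrite ler_wpM2l ?prefix_weight_ge0.
Qed.

Lemma expect_ge0 T (f : arrivals -> receptions n -> R) :
  (forall a r, 0 <= f a r) -> 0 <= expect lam mu T f.
Proof. by move=> f0; rewrite -(expect_cst n lam mu T 0); apply: ler_expect. Qed.

End NonnegativeExpectation.

Section Drift.

Variables (R : realType) (n : nat) (lam mu : R) (j : 'I_n).
Hypotheses (lam01 : 0 <= lam <= 1) (mu01 : 0 <= mu <= 1) (lam_lt_mu : lam < mu).

Lemma mean_queue_step q :
  \sum_(b : bool) bern lam b * \sum_(c : bool) bern mu c * ((q.+1 + b - c)%N)%:R
  = q.+1%:R + lam - mu :> R.
Proof.
have natE (b c : bool) : ((q.+1 + b - c)%N)%:R = q.+1%:R + b%:R - c%:R :> R.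
  by rewrite natrB ?natrD //; case: b; case: c => /=; lia.
under eq_bigr do under eq_bigr do rewrite natE.
rewrite !big_bool /=; ring.
Qed.

(* Foster-Lyapunov: while the queue is positive its conditional mean drops by
   mu - lam per slot, so each busy slot costs (mu - lam) of E[g Q]. *)
Lemma sum_busy_for_le D T0 (g : arrivals -> receptions n -> R) :
  determined_before T0 g -> (forall a r, 0 <= g a r) ->
  \sum_(d < D) expect lam mu (T0 + d) (fun a r => g a r * (busy_for j a r d T0)%:R)
  <= expect lam mu T0 (fun a r => g a r * (queue j a r T0)%:R) / (mu - lam).
Proof.
have gap : 0 < mu - lam by rewrite subr_gt0.
elim: D T0 g => [|D IH] T0 g g_det g0.
  rewrite big_ord0 divr_ge0 ?subr_ge0 ?(ltW lam_lt_mu) //.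
  by apply: expect_ge0 => // a r; apply: mulr_ge0.
pose gb a r := g a r * (0 < queue j a r T0)%N%:R.
have gb_det : determined_before T0 gb.
  move=> a a' r r' aa' rr'.
  by rewrite /gb (g_det a a' r r') // (queue_determined j aa' rr').
have drift :
    expect lam mu T0 (fun a r => g a r * (busy_for j a r 0 T0)%:R)
    + expect lam mu T0.+1 (fun a r => gb a r * (queue j a r T0.+1)%:R) / (mu - lam)
    = expect lam mu T0 (fun a r => g a r * (queue j a r T0)%:R) / (mu - lam).
  rewrite (expect_step_queue lam mu j (fun q _ b c => ((q + b - c)%N)%:R) gb_det).
  rewrite !(mulrC _ (mu - lam)^-1) -!expectMl -expectD; apply: eq_expect => a r.
  rewrite /gb /= andbT; case: (queue j a r T0) => [|q] /=.
    by rewrite !mulr0 !mul0r mulr0 addr0.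
  by rewrite mean_queue_step; field; lra.
rewrite big_ord_recl addn0 -drift lerD2l.
under eq_bigr => d _.
  rewrite lift0 addnS -addSn /=.
  rewrite (eq_expect _ _ _ (g := fun a r => gb a r * (busy_for j a r d T0.+1)%:R)).
    over.
  by move=> a r; rewrite /gb; case: (0 < queue j a r T0)%N; rewrite ?mulr1 ?mulr0 ?mul0r.
apply: IH; first exact: determined_before_le (leqnSn T0) gb_det.
by move=> a r; rewrite mulr_ge0.
Qed.

End Drift.

Section Visits.

Variables (R : realType) (n : nat) (lam mu : R) (j : 'I_n).

Definition visit_prob t m x : R := expect lam mu t (fun a r =>
  ((arrived_before a t == m) && (x <= queue j a r t)%N)%:R).

Definition visit_prob_pred t m x : R := expect lam mu t (fun a r =>
  (((arrived_before a t).+1 == m) && (x <= queue j a r t)%N)%:R).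

Definition visits N m x := \sum_(t < N) visit_prob t m x.

Definition visits_pred N m x := \sum_(t < N) visit_prob_pred t m x.

Lemma mean_visit_step q k m y :
  \sum_(b : bool) bern lam b * \sum_(c : bool) bern mu c *
     (((k + b)%N == m) && (y.+1 <= q + b - c)%N)%:R =
  (1 - lam) * (mu * ((k == m) && (y.+2 <= q)%N)%:R
               + (1 - mu) * ((k == m) && (y.+1 <= q)%N)%:R)
  + lam * (mu * ((k.+1 == m) && (y.+1 <= q)%N)%:R
           + (1 - mu) * ((k.+1 == m) && (y <= q)%N)%:R).
Proof.
rewrite !big_bool /= !addn1 !addn0 subn1 /=.
have -> : (y < q - 1)%N = (y.+1 < q)%N by apply/idP/idP; lia.
by rewrite !subn0 addrC.
Qed.

Lemma mean_visit_step0 q k m :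
  \sum_(b : bool) bern lam b * \sum_(c : bool) bern mu c *
     (((k + b)%N == m) && (0 <= q + b - c)%N)%:R =
  (1 - lam) * (k == m)%:R + lam * (k.+1 == m)%:R.
Proof. rewrite !big_bool /= !addn1 !addn0 !leq0n !andbT; ring. Qed.

Lemma visit_probS t m y :
  visit_prob t.+1 m y.+1 =
  (1 - lam) * (mu * visit_prob t m y.+2 + (1 - mu) * visit_prob t m y.+1)
  + lam * (mu * visit_prob_pred t m y.+1 + (1 - mu) * visit_prob_pred t m y).
Proof.
rewrite /visit_prob /visit_prob_pred.
under eq_expect do rewrite arrived_beforeS.
rewrite (expect_step_queue1 lam mu j t (fun q k (b c : bool) =>
  (((k + b)%N == m) && (y.+1 <= q + b - c)%N)%:R)).
under eq_expect do rewrite mean_visit_step.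
by rewrite !expectD !expectMl !expectD !expectMl.
Qed.

Lemma visit_probS0 t m :
  visit_prob t.+1 m 0 = (1 - lam) * visit_prob t m 0 + lam * visit_prob_pred t m 0.
Proof.
rewrite /visit_prob /visit_prob_pred.
under eq_expect do rewrite arrived_beforeS.
rewrite (expect_step_queue1 lam mu j t (fun q k (b c : bool) =>
  (((k + b)%N == m) && (0 <= q + b - c)%N)%:R)).
under eq_expect do rewrite mean_visit_step0.
rewrite expectD !expectMl.
by congr (_ * _ + _ * _); apply: eq_expect => a r; rewrite leq0n andbT.
Qed.

Lemma visit_prob0 m x : visit_prob 0 m x = ((0 == m) && (x <= 0)%N)%:R.
Proof.
rewrite -[RHS](expect_cst n lam mu 0).
by apply: eq_expect => a r; rewrite /arrived_before big_ord0.
Qed.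

Lemma visits_pred0 N x : visits_pred N 0 x = 0.
Proof.
by apply: big1 => t _; rewrite -[RHS](expect_cst n lam mu t); apply: eq_expect.
Qed.

Lemma visits_predS N m x : visits_pred N m.+1 x = visits N m x.
Proof. by apply: eq_bigr => t _; apply: eq_expect. Qed.

Lemma visits_eq0 N m x : (N <= x)%N -> visits N m x = 0.
Proof.
move=> Nx; apply: big1 => t _; rewrite -[RHS](expect_cst n lam mu t).
apply: eq_expect => a r; have := queue_le j a r t; have := ltn_ord t.
by move=> tN Qt; rewrite (_ : (x <= _)%N = false) ?andbF //; apply/negP; lia.
Qed.

Hypotheses (lam01 : 0 <= lam <= 1) (mu01 : 0 <= mu <= 1).

Lemma visits_le_shift N m x :
  visits N m x <= visit_prob 0 m x + \sum_(t < N) visit_prob t.+1 m x.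
Proof.
have p0 t y : 0 <= visit_prob t m y by apply: expect_ge0.
case: N => [|N]; first by rewrite /visits !big_ord0 addr0.
rewrite /visits big_ord_recl lerD2l [leRHS]big_ord_recr /= lerDl //.
Qed.

Lemma visits_le_rec N m y :
  visits N m y.+1 <=
  (1 - lam) * (mu * visits N m y.+2 + (1 - mu) * visits N m y.+1)
  + lam * (mu * visits_pred N m y.+1 + (1 - mu) * visits_pred N m y).
Proof.
apply: le_trans (visits_le_shift N m y.+1) _.
rewrite visit_prob0 andbF add0r; under eq_bigr do rewrite visit_probS.
by rewrite !big_split /= -!mulr_sumr !big_split /= -!mulr_sumr.
Qed.

Lemma visits_le_rec0 N m :
  visits N m 0 <= (0 == m)%:R + (1 - lam) * visits N m 0 + lam * visits_pred N m 0.
Proof.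
apply: le_trans (visits_le_shift N m 0) _.
rewrite visit_prob0 andbT -addrA lerD2l; under eq_bigr do rewrite visit_probS0.
by rewrite big_split /= -!mulr_sumr.
Qed.

End Visits.

Definition balance_ratio (R : realType) (lam mu : R) := lam * (1 - mu) / (mu * (1 - lam)).

Section BalanceRatio.

Variables (R : realType) (lam mu : R).

Local Notation rho := (balance_ratio lam mu).

Lemma balance_ratio_ge0 : 0 < lam -> lam < mu -> mu < 1 -> 0 <= rho.
Proof. by move=> *; apply: divr_ge0; apply: mulr_ge0; lra. Qed.

Lemma balance_ratio_lt1 : 0 < lam -> lam < mu -> mu < 1 -> rho < 1.
Proof.
move=> lam_gt0 lam_lt_mu mu_lt1.
by rewrite ltr_pdivrMr ?mul1r; [nra | apply: mulr_gt0; lra].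
Qed.

(* rho is the root in (0, 1) of (1 - lam) mu X^2 - (lam + mu - lam mu) X
   + lam (1 - mu) = 0, so geometric bounds z rho^x propagate through the
   one-step recursion of the visit counts. *)
Lemma balance_step (A B C D z : R) :
  0 < lam -> lam < mu -> mu < 1 -> 0 <= z ->
  A <= (1 - lam) * (mu * B + (1 - mu) * A) + lam * (mu * C + (1 - mu) * D) ->
  B <= z * rho ^+ 2 / lam -> C <= z * rho / lam -> D <= z / lam ->
  A <= z * rho / lam.
Proof.
move=> lam_gt0 lam_lt_mu mu_lt1 z0 rec Bz Cz Dz.
have rho0 := balance_ratio_ge0 lam_gt0 lam_lt_mu mu_lt1.
have denom_gt0 : 0 < lam + mu - lam * mu by nra.
have rec' : A * (lam + mu - lam * mu) <=
            (1 - lam) * mu * B + lam * mu * C + lam * (1 - mu) * D by lra.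
have bound : (1 - lam) * mu * B + lam * mu * C + lam * (1 - mu) * D <=
    (1 - lam) * mu * (z * rho ^+ 2 / lam) + lam * mu * (z * rho / lam)
    + lam * (1 - mu) * (z / lam).
  by rewrite !lerD // ler_wpM2l //; nra.
rewrite -(ler_pM2r denom_gt0).
have -> : z * rho / lam * (lam + mu - lam * mu) =
    (1 - lam) * mu * (z * rho ^+ 2 / lam) + lam * mu * (z * rho / lam)
    + lam * (1 - mu) * (z / lam).
  by rewrite /balance_ratio; field; lra.
exact: le_trans rec' bound.
Qed.

End BalanceRatio.

Section GeometricVisits.

Variables (R : realType) (lam mu : R).
Hypotheses (lam_gt0 : 0 < lam) (lam_lt_mu : lam < mu) (mu_lt1 : mu < 1).

Local Notation rho := (balance_ratio lam mu).

Let rho_ge0 : 0 <= rho := balance_ratio_ge0 lam_gt0 lam_lt_mu mu_lt1.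
Let lam01 : 0 <= lam <= 1.
Proof. by rewrite (ltW lam_gt0) (ltW (lt_trans lam_lt_mu mu_lt1)). Qed.
Let mu01 : 0 <= mu <= 1.
Proof. by rewrite (ltW (lt_trans lam_gt0 lam_lt_mu)) (ltW mu_lt1). Qed.
Let geometric_ge0 x : 0 <= rho ^+ x / lam.
Proof. by rewrite divr_ge0 ?exprn_ge0 // ltW. Qed.

Variables (n : nat) (j : 'I_n) (N : nat).


Lemma visits_succ_le m :
  (forall x, visits_pred lam mu j N m x <= rho ^+ x / lam) ->
  forall y, visits lam mu j N m y.+1 <= rho ^+ y.+1 / lam.
Proof.
move=> pred_le y; have [d] : exists d, (N <= y.+1 + d)%N by exists N; lia.
elim: d y => [|d IH] y Nyd.
  by rewrite addn0 in Nyd; rewrite visits_eq0.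
rewrite exprS (mulrC rho).
apply: (balance_step lam_gt0 lam_lt_mu mu_lt1 (exprn_ge0 y rho_ge0) (visits_le_rec j lam01 mu01 N m y)).
- by rewrite -exprD addn2; apply: IH; rewrite addSnnS.
- by rewrite -exprSr; apply: pred_le.
- exact: pred_le.
Qed.

Lemma visits0_le m :
  (0 == m)%:R + lam * visits_pred lam mu j N m 0 <= 1 ->
  visits lam mu j N m 0 <= rho ^+ 0 / lam.
Proof.
move=> pred0; rewrite expr0 ler_pdivlMr // mulrC.
have := visits_le_rec0 j lam01 mu01 N m; lra.
Qed.

Lemma visits_le m x : visits lam mu j N m x <= rho ^+ x / lam.
Proof.
elim: m x => [|m IH] [|y].
- by apply: visits0_le; rewrite visits_pred0 mulr0 addr0.
- by apply: visits_succ_le => x'; rewrite visits_pred0 geometric_ge0.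
- by apply: visits0_le; rewrite visits_predS add0r mulrC -ler_pdivlMr.
- by apply: visits_succ_le => x'; rewrite visits_predS.
Qed.

End GeometricVisits.

Lemma sum_expr_le_inv (R : realFieldType) (x : R) M :
  0 <= x < 1 -> \sum_(i < M) x ^+ i <= (1 - x)^-1.
Proof.
move=> /andP[x0 x1]; have gap : 0 < 1 - x by lra.
have telescope : (1 - x) * \sum_(i < M) x ^+ i = 1 - x ^+ M.
  elim: M => [|M IH]; first by rewrite big_ord0 mulr0 expr0 subrr.
  by rewrite big_ord_recr /= mulrDr IH exprS; ring.
rewrite -(ler_pM2l gap) telescope mulfV ?gt_eqF // gerBl.
exact: exprn_ge0.
Qed.

Lemma sum_indicator_leq (R : numDomainType) (M Q : nat) : (Q < M)%N ->
  \sum_(x < M) (x <= Q)%N%:R = Q.+1%:R :> R.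
Proof.
move=> QM; suff -> : \sum_(x < M) (x <= Q)%N%:R = (minn Q.+1 M)%:R :> R.
  by rewrite (minn_idPl QM).
elim: M {QM} => [|M IH]; first by rewrite big_ord0 minn0.
by rewrite big_ord_recr /= IH -natrD; congr _%:R; case: (leqP M Q); lia.
Qed.

Section DelayBound.

Variables (R : realType) (F : finFieldType) (n : nat) (lam mu : R).
Hypotheses (lam_gt0 : 0 < lam) (lam_lt_mu : lam < mu) (mu_lt1 : mu < 1).
Variables (s : scheme F n) (j : 'I_n) (k : nat).
Hypotheses (s_known : sends_known s) (s_IGP : IGP s).

Let lam01 : 0 <= lam <= 1.
Proof. by rewrite (ltW lam_gt0) (ltW (lt_trans lam_lt_mu mu_lt1)). Qed.
Let mu01 : 0 <= mu <= 1.
Proof. by rewrite (ltW (lt_trans lam_gt0 lam_lt_mu)) (ltW mu_lt1). Qed.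

Local Notation visit_mass t := (expect lam mu t (fun a r =>
  (arrived_before a t == k)%:R * (queue j a r t).+1%:R)).

Lemma late_le_busy t d :
  prefixProb (t + d).+1 lam mu (late s j k t d) <=
  expect lam mu (t.+1 + d) (fun a r =>
    (a t && (arrived_before a t == k))%:R * (busy_for j a r d t.+1)%:R).
Proof.
rewrite prefixProbE -addSn; apply: ler_expect => // a r.
case: asboolP => [/(late_busy s_known s_IGP) /and3P[-> /eqP -> ->] | _].
  by rewrite eqxx mulr1.
by rewrite mulr_ge0.
Qed.

Lemma arrival_queue_le t :
  expect lam mu t.+1 (fun a r =>
    (a t && (arrived_before a t == k))%:R * (queue j a r t.+1)%:R)
  <= lam * visit_mass t.
Proof.
rewrite (expect_step_queue1 lam mu j t (fun q c (b b' : bool) =>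
  (b && (c == k))%:R * ((q + b - b')%N)%:R)) -expectMl.
apply: ler_expect => // a r; rewrite !big_bool /= !mul0r !mulr0 !addr0.
case: (arrived_before a t == k); rewrite ?(mul0r, mulr0, addr0) //=.
rewrite addn1 subn1 subn0 /= !mul1r -natr1.
have := ler0n R (queue j a r t); move: lam01 mu01 => /andP[? ?] /andP[? ?]; nra.
Qed.

Lemma sum_busy_after_arrival_le t D :
  \sum_(d < D) expect lam mu (t.+1 + d) (fun a r =>
    (a t && (arrived_before a t == k))%:R * (busy_for j a r d t.+1)%:R)
  <= lam * visit_mass t / (mu - lam).
Proof.
have arrival_det : determined_before t.+1
    (fun a (_ : receptions n) => (a t && (arrived_before a t == k))%:R : R).
  move=> a a' r r' aa' _.
  have aa't u : (u < t)%N -> a u = a' u by move=> ut; apply/aa'/ltnW.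
  by rewrite aa' // (@arrived_before_determined n t a a' r r aa't (fun _ _ => erefl)).
apply: le_trans (sum_busy_for_le j lam01 mu01 lam_lt_mu D arrival_det _) _ => //.
by rewrite ler_pM2r ?invr_gt0 ?subr_gt0 // arrival_queue_le.
Qed.

Lemma sum_visit_mass_le N :
  \sum_(t < N) visit_mass t <= (1 - balance_ratio lam mu)^-1 / lam.
Proof.
have -> : \sum_(t < N) visit_mass t = \sum_(x < N.+1) visits lam mu j N k x.
  rewrite /visits exchange_big; apply: eq_bigr => t _.
  rewrite -(expect_sum lam mu t N.+1 (fun x a r =>
    ((arrived_before a t == k) && (x <= queue j a r t)%N)%:R)).
  apply: eq_expect => a r; case: (arrived_before a t == k) => /=.
    by rewrite mul1r sum_indicator_leq // ltnS (leq_trans (queue_le j a r t)) // ltnW.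
  by rewrite mul0r big1.
apply: (@le_trans _ _ (\sum_(x < N.+1) balance_ratio lam mu ^+ x / lam)).
  by apply: ler_sum => x _; apply: visits_le.
rewrite -mulr_suml ler_pM2r ?invr_gt0 // sum_expr_le_inv //.
by rewrite balance_ratio_ge0 ?balance_ratio_lt1.
Qed.

Lemma truncExpDelay_le N :
  truncExpDelay lam mu s j k N <= mu * (1 - lam) / (mu - lam) ^+ 2.
Proof.
(* [lra] does not pick up the section hypotheses, so they are restated. *)
have gap : 0 < mu - lam by rewrite subr_gt0.
have lam_pos : 0 < lam := lam_gt0.
have mu_lt1' : mu < 1 := mu_lt1.
have busy_bound : truncExpDelay lam mu s j k N <=
    \sum_(t < N) lam * visit_mass t / (mu - lam).
  rewrite /truncExpDelay exchange_big; apply: ler_sum => t _.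
  apply: le_trans (sum_busy_after_arrival_le t N).
  by apply: ler_sum => d _; apply: late_le_busy.
apply: (le_trans busy_bound); rewrite -mulr_suml -mulr_sumr.
apply: le_trans (ler_wpM2r _ (ler_wpM2l _ (sum_visit_mass_le N))) _.
- by rewrite invr_ge0 ltW.
- exact: ltW.
have -> : lam * ((1 - balance_ratio lam mu)^-1 / lam) / (mu - lam) =
          mu * (1 - lam) / (mu - lam) ^+ 2.
  by rewrite /balance_ratio; field; lra.
exact: lexx.
Qed.

End DelayBound.

Lemma eventually_delay_le_trans (R : realType) (F : finFieldType) n (lam mu : R)
    (s : scheme F n) j (B B' : R) :
  B <= B' -> eventually_delay_le lam mu s j B -> eventually_delay_le lam mu s j B'.
Proof. by move=> BB' [K delay_le]; exists K => k N Kk; apply: le_trans (delay_le k N Kk) BB'. Qed.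

Lemma IGP_delay_le (R : realType) (F : finFieldType) n (lam mu : R)
    (s : scheme F n) j :
  0 < lam -> lam < mu -> mu < 1 -> valid_IGP_scheme s ->
  eventually_delay_le lam mu s j (mu^-1 / (1 - lam / mu) ^+ 2).
Proof.
move=> lam_gt0 lam_lt_mu mu_lt1 [_ [s_known s_IGP]]; exists 0%N => k N _.
apply: le_trans (truncExpDelay_le lam_gt0 lam_lt_mu mu_lt1 j k s_known s_IGP N) _.
have -> : mu^-1 / (1 - lam / mu) ^+ 2 = mu / (mu - lam) ^+ 2 by field; lra.
by rewrite ler_pM2r ?invr_gt0 ?exprn_gt0 ?subr_gt0 // ger_pMr; lra.
Qed.

Theorem theorem9 :
  forall (R : realType) (F : finFieldType) (n : nat),
    (* regime 1: mu fixed, lambda -> mu^- *)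
    (forall mu : R, 0 < mu < 1 ->
       exists C : R, 0 < C /\ exists delta : R, 0 < delta /\
       forall lam : R, 0 < lam -> lam < mu -> 1 - delta < lam / mu ->
       forall s : scheme F n, valid_IGP_scheme s ->
       forall j : 'I_n,
         eventually_delay_le lam mu s j (C / (1 - lam / mu) ^+ 2))
    /\
    (* regime 2: lambda fixed, mu -> lambda^+ *)
    (forall lam : R, 0 < lam < 1 ->
       exists C : R, 0 < C /\ exists delta : R, 0 < delta /\
       forall mu : R, lam < mu -> mu < 1 -> 1 - delta < lam / mu ->
       forall s : scheme F n, valid_IGP_scheme s ->
       forall j : 'I_n,
         eventually_delay_le lam mu s j (C / (1 - lam / mu) ^+ 2)).
Proof.
move=> R F n; split.
  move=> mu /andP[mu_gt0 mu_lt1]; exists mu^-1; split; first by rewrite invr_gt0.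
  exists 1; split=> // lam lam_gt0 lam_lt_mu _ s s_valid j.
  exact: IGP_delay_le.
move=> lam /andP[lam_gt0 lam_lt1]; exists lam^-1; split; first by rewrite invr_gt0.
exists 1; split=> // mu lam_lt_mu mu_lt1 _ s s_valid j.
apply: eventually_delay_le_trans (IGP_delay_le j lam_gt0 lam_lt_mu mu_lt1 s_valid).
have mu_gt0 : 0 < mu := lt_trans lam_gt0 lam_lt_mu.
by apply: ler_wpM2r; rewrite ?invr_ge0 ?sqr_ge0 // lef_pV2 ?posrE // ltW.
Qed.
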